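(* Let $\mathcal{D}$ be a banded unlink diagram of a surface link $S$ in a smooth $4$-manifold $X$, with diagrammatic quandle $Q(\mathcal{D})$, and let $C=\{x_1,\dots,x_n\}$ be the primary generators corresponding to the arcs contained in a single component of the link $L$ of $\mathcal{D}$. Let $d$ be an integer. If $x_i^d\equiv1$ for some $x_i\in C$, then $x_j^d\equiv1$ for every $x_j\in C$.
   Context: Banded unlink diagram: for a self-indexing Morse function $h:X\to[0,4]$ with Kirby diagram $\mathcal{K}=L_1\cup L_2$ (dotted link $L_1$ for $1$-handles, framed link $L_2$ for $2$-handles), a surface in banded unlink position meets $h^{-1}(t)$, $t\in(1/2,3/2)$, in a link $L$, and at level $3/2$ in $L$ plus a set $v$ of bands; the banded unlink diagram is $\mathcal{D}=(\mathcal{K},L,v)$ (with $L$ bounding disjoint disks at level $1/2$ and the band-resolved link bounding disjoint disks at level $5/2$). $Q(\mathcal{D})$ is the augmented quandle presented with primary generators the arcs $x_i$ of $L$ and operator generators the arcs $a_j$ of $L_1$; at each crossing of $L$ under an arc $y$ of $L\cup L_1$ the incoming arc $x_i$ and outgoing arc $x_{i+1}$ satisfy $x_{i+1}=x_i^{y^{\epsilon}}$ with $\epsilon=\pm1$ determined by the orientation of $y$ (no change under bands or $L_2$); further relations come from bands, crossings of $L_1$ and the $2$-handle link $L_2$. Every element acts on $Q(\mathcal{D})$ through its image in the operator group $F(\mathbf x\cup\mathbf a)/\!\equiv$; for a word $w\in F(\mathbf x\cup\mathbf a)$, $w\equiv1$ means $w$ is trivial in this operator group (it acts as the identity), and the augmentation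 satisfies $\partial(x^{w})=w^{-1}\partial(x)w$. *)

From HB Require Import structures.
From mathcomp Require Import all_boot.
From mathcomp Require Import monoid ssrint.

Set Implicit Arguments.
Unset Strict Implicit.
Unset Printing Implicit Defensive.

Local Open Scope group_scope.

Definition zexpg (G : groupType) (g : G) (d : int) : G :=
  match d with
  | Posz n => g ^+ n
  | Negz n => (g ^+ n.+1)^-1
  end.

Definition signexp (G : groupType) (g : G) (eps : bool) : G :=
  if eps then g else g^-1.

(* Augmented quandle (Joyce): a set Q with a right action of a group G
   (the operator group) and an augmentation map aug : Q -> G such that
   x^(aug x) = x and aug (x^g) = g^-1 aug(x) g.  The quandle operation is
   x |> y := x^(aug y). *)
Record augQuandle := AugQuandle {
  aq_Q : Type;
  aq_G : groupType;
  aq_act : aq_Q -> aq_G -> aq_Q;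
  aq_aug : aq_Q -> aq_G;
  aq_act1 : forall x, aq_act x 1 = x;
  aq_actM : forall x g h, aq_act (aq_act x g) h = aq_act x (g * h);
  aq_act_aug : forall x, aq_act x (aq_aug x) = x;
  aq_augJ : forall x g, aq_aug (aq_act x g) = g^-1 * aq_aug x * g
}.

(* An operator g is "≡ 1": it is trivial in the operator group, i.e. it
   acts as the identity on the augmented quandle. *)
Definition op_trivial (AQ : augQuandle) (g : aq_G AQ) : Prop :=
  forall q : aq_Q AQ, aq_act q g = q.

(* Diagrammatic data of a banded unlink diagram relevant to the quandle:
   primary generators are arcs of L (type P), operator generators are arcs
   of the dotted link L1 (type A). *)
Record diagPresentation (P A : Type) (AQ : augQuandle) := DiagPresentation {
  dp_prim : P -> aq_Q AQ;
  dp_oper : A -> aq_G AQ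
}.

Definition dp_opimg (P A : Type) (AQ : augQuandle)
    (D : diagPresentation P A AQ) (y : P + A) : aq_G AQ :=
  match y with
  | inl x => aq_aug (dp_prim D x)
  | inr a => dp_oper D a
  end.

Definition dp_wordpow (P A : Type) (AQ : augQuandle)
    (D : diagPresentation P A AQ) (x : P) (d : int) : aq_G AQ :=
  zexpg (aq_aug (dp_prim D x)) d.

(* A component of L, traversed along its orientation, is given by its arcs
   comp 0, ..., comp (n-1) in order; when passing from arc i to arc i+1 the
   component goes under the arc over i of L ∪ L1 with sign eps i, and the
   diagram imposes the crossing relation x_{i+1} = x_i^{y^eps}. *)
Definition component_relations (P A : Type) (AQ : augQuandle)
    (D : diagPresentation P A AQ) (n : nat) (comp : 'I_n -> P)
    (over : 'I_n -> P + A) (eps : 'I_n -> bool) : Prop :=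
  forall (i j : 'I_n), val j = (val i).+1 ->
    dp_prim D (comp j) =
      aq_act (dp_prim D (comp i)) (signexp (dp_opimg D (over i)) (eps i)).

(* Passing under an arc replaces x by x^g, whose augmentation is the
   conjugate of that of x by g; hence the operator x_{i+1}^d is a conjugate
   of x_i^d, and acting trivially is invariant under conjugation.  Walking
   along the component propagates triviality from one arc to all of them. *)
From mathcomp Require Import all_boot.
From mathcomp Require Import monoid ssrint.

Local Open Scope group_scope.

Lemma zexpgJ (G : groupType) (x g : G) (d : int) :
  zexpg (x ^ g) d = zexpg x d ^ g.
Proof. by case: d => m /=; rewrite ?conjVg conjXg. Qed.

Lemma ord_chain_iff (n : nat) (P : 'I_n -> Prop) :
    (forall i j : 'I_n, val j = (val i).+1 -> P i <-> P j) ->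
  forall i j : 'I_n, P i <-> P j.
Proof.
move=> step.
have to_first (i j : 'I_n) : val j = 0 -> P i <-> P j.
  case: i => k; elim: k => [|k IH] hk j0.
    by rewrite (_ : Ordinal hk = j) //; apply: val_inj.
  have hk' : k < n := ltnW hk.
  exact: iff_trans (iff_sym (step (Ordinal hk') (Ordinal hk) erefl)) (IH hk' j0).
move=> i j; pose z : 'I_n := Ordinal (leq_ltn_trans (leq0n _) (ltn_ord i)).
exact: iff_trans (to_first i z erefl) (iff_sym (to_first j z erefl)).
Qed.

Section AugmentedQuandle.

Variable AQ : augQuandle.

Lemma aq_aug_act (x : aq_Q AQ) (g : aq_G AQ) :
  aq_aug (aq_act x g) = aq_aug x ^ g.
Proof. by rewrite aq_augJ conjgE mulgA. Qed.

Lemma op_trivialJ (w h : aq_G AQ) : op_trivial w -> op_trivial (w ^ h).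
Proof.
move=> tw q.
by rewrite conjgE -!aq_actM tw aq_actM mulVg aq_act1.
Qed.

Lemma op_trivialJ_iff (w h : aq_G AQ) : op_trivial (w ^ h) <-> op_trivial w.
Proof.
split; last exact: op_trivialJ.
by move=> /(@op_trivialJ _ h^-1); rewrite conjgK.
Qed.

Lemma op_trivial_zexpg_act (x : aq_Q AQ) (g : aq_G AQ) (d : int) :
  op_trivial (zexpg (aq_aug (aq_act x g)) d) <->
  op_trivial (zexpg (aq_aug x) d).
Proof. by rewrite aq_aug_act zexpgJ; apply: op_trivialJ_iff. Qed.

End AugmentedQuandle.

Theorem lemma3p15 (P A : Type) (AQ : augQuandle)
    (D : diagPresentation P A AQ) (n : nat) (comp : 'I_n -> P)
    (over : 'I_n -> P + A) (eps : 'I_n -> bool) (d : int) :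
  component_relations D comp over eps ->
  forall i : 'I_n, op_trivial (dp_wordpow D (comp i) d) ->
  forall j : 'I_n, op_trivial (dp_wordpow D (comp j) d).
Proof.
move=> rel i ti j.
pose trivial_at k := op_trivial (dp_wordpow D (comp k) d).
have crossing (k l : 'I_n) : val l = (val k).+1 -> trivial_at k <-> trivial_at l.
  move=> kl; rewrite /trivial_at /dp_wordpow (rel k l kl).
  exact: iff_sym (op_trivial_zexpg_act _ _ _ _).
exact: (@ord_chain_iff n trivial_at crossing i j).1.
Qed.
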